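(* Let $r>2.2$ be real and let $p,q$ be primes with $p>q^2$. Then $\sigma_{-r}(qp)<\sigma_{-r}(q^2)$.
   Context: For $n\in\mathbb{N}$ and real $r$, $\sigma_{-r}(n)=\sum_{d\mid n}d^{-r}$. *)

From Stdlib Require Import Reals Lra Lia Arith List Znumtheory ZArith.
Open Scope R_scope.

Definition divisors_list (n : nat) : list nat :=
  filter (fun d => Nat.eqb (n mod d) 0) (seq 1 n).

Definition sigma_neg (r : R) (n : nat) : R :=
  fold_right Rplus 0 (map (fun d => Rpower (INR d) (- r)) (divisors_list n)).

(* The divisors of [q p] are [1, q, p, q p] and those of [q q] are [1, q, q q], so after
   cancelling the common terms it suffices that [p^-r + (q p)^-r < q^-2r], i.e.
   [q^r (q^r + 1) < p^r].  Writing [r = 2 + s] with [s >= 0] and [S = q^s >= 1], this follows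
   from [p^r >= (q^2 + 1)^2 (q^2)^s = (q^4 + 2 q^2 + 1) S^2 > q^4 S^2 + q^2 S]; in particular
   the bound holds for every [r >= 2]. *)

From Stdlib Require Import Reals ZArith Znumtheory.
From Stdlib Require Import Lra Lia List Permutation.
Open Scope R_scope.

Lemma Zdivide_prime_mul (a b x : Z) :
  prime a -> prime b -> (0 < x)%Z -> (x | a * b)%Z ->
  x = 1%Z \/ x = a \/ x = b \/ x = (a * b)%Z.
Proof.
  intros Ha Hb Hx Hdiv.
  pose proof (prime_ge_2 _ Ha); pose proof (prime_ge_2 _ Hb).
  destruct (Zdivide_dec b x) as [[k ->] | Hnb].
  - assert (Hka : (k | a)%Z) by (apply (Z.mul_divide_cancel_r k a b); [lia | exact Hdiv]).
    destruct (prime_divisors _ Ha _ Hka) as [E | [E | [E | E]]]; subst k; lia.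
  - assert (Hxa : (x | a)%Z).
    { apply Gauss with b; [now rewrite Z.mul_comm |].
      apply rel_prime_sym, prime_rel_prime; assumption. }
    destruct (prime_divisors _ Ha _ Hxa) as [E | [E | [E | E]]]; subst x; lia.
Qed.

Lemma In_divisors_list (n d : nat) :
  (0 < n)%nat -> In d (divisors_list n) <-> (0 < d)%nat /\ Nat.divide d n.
Proof.
  intros Hn; unfold divisors_list.
  rewrite filter_In, in_seq, Nat.eqb_eq, Nat.Lcm0.mod_divide.
  split; intros [Hd Hdiv]; split; try assumption; [lia |].
  pose proof (Nat.divide_pos_le _ _ Hn Hdiv); lia.
Qed.

Lemma sigma_neg_divisors_perm (r : R) (n : nat) (l : list nat) :
  (0 < n)%nat -> NoDup l -> (forall d, In d l <-> (0 < d)%nat /\ Nat.divide d n) ->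
  sigma_neg r n = fold_right Rplus 0 (map (fun d => Rpower (INR d) (- r)) l).
Proof.
  intros Hn Hl Hdivs.
  assert (Hperm : Permutation (divisors_list n) l).
  { apply NoDup_Permutation; [apply NoDup_filter, seq_NoDup | exact Hl |].
    intros d; rewrite In_divisors_list, Hdivs by exact Hn; reflexivity. }
  unfold sigma_neg; induction (Permutation_map (fun d => Rpower (INR d) (- r)) Hperm);
    simpl; lra.
Qed.

Lemma divisors_mul_primes (a b d : nat) :
  prime (Z.of_nat a) -> prime (Z.of_nat b) ->
  (0 < d)%nat /\ Nat.divide d (a * b) <-> d = 1%nat \/ d = a \/ d = b \/ d = (a * b)%nat.
Proof.
  intros Ha Hb.
  pose proof (prime_ge_2 _ Ha); pose proof (prime_ge_2 _ Hb).
  split.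
  - intros [Hd [k Hk]].
    assert (HZ : (Z.of_nat d | Z.of_nat a * Z.of_nat b)%Z)
      by (exists (Z.of_nat k); rewrite <- !Nat2Z.inj_mul, Hk; reflexivity).
    destruct (Zdivide_prime_mul _ _ (Z.of_nat d) Ha Hb ltac:(lia) HZ)
      as [E | [E | [E | E]]]; rewrite <- ?Nat2Z.inj_mul in E; lia.
  - intros [-> | [-> | [-> | ->]]]; split;
      [lia | apply Nat.divide_1_l | lia | apply Nat.divide_factor_l
      | lia | apply Nat.divide_factor_r | nia | apply Nat.divide_refl].
Qed.

Lemma sigma_neg_mul_primes (r : R) (a b : nat) :
  prime (Z.of_nat a) -> prime (Z.of_nat b) -> a <> b ->
  sigma_neg r (a * b) =
    Rpower (INR 1) (- r) + Rpower (INR a) (- r) + Rpower (INR b) (- r)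
    + Rpower (INR (a * b)) (- r).
Proof.
  intros Ha Hb Hab.
  pose proof (prime_ge_2 _ Ha); pose proof (prime_ge_2 _ Hb).
  rewrite (sigma_neg_divisors_perm r _ (1 :: a :: b :: a * b :: nil)%nat).
  - simpl; lra.
  - nia.
  - repeat constructor; simpl; nia.
  - intros d; rewrite divisors_mul_primes by assumption; simpl; intuition congruence.
Qed.

Lemma sigma_neg_sq_prime (r : R) (a : nat) :
  prime (Z.of_nat a) ->
  sigma_neg r (a * a) =
    Rpower (INR 1) (- r) + Rpower (INR a) (- r) + Rpower (INR (a * a)) (- r).
Proof.
  intros Ha.
  pose proof (prime_ge_2 _ Ha).
  rewrite (sigma_neg_divisors_perm r _ (1 :: a :: a * a :: nil)%nat).
  - simpl; lra.
  - nia.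
  - repeat constructor; simpl; nia.
  - intros d; rewrite divisors_mul_primes by assumption; simpl; intuition congruence.
Qed.

Lemma Rpower_mul_succ_lt (a b r : R) :
  1 <= a -> 2 <= r -> a * a + 1 <= b -> Rpower a r * (Rpower a r + 1) < Rpower b r.
Proof.
  intros Ha Hr Hb.
  set (s := r - 2).
  assert (Ers : r = INR 2 + s) by (unfold s; simpl; lra).
  set (S := Rpower a s).
  assert (HS : 1 <= S).
  { unfold S; rewrite <- (Rpower_O a) by lra; apply Rle_Rpower; unfold s; lra. }
  assert (Ea : Rpower a r = a ^ 2 * S)
    by (rewrite Ers, Rpower_plus, Rpower_pow by lra; reflexivity).
  assert (Hsq : (a * a + 1) ^ 2 * (S * S) <= Rpower b r).
  { apply Rle_trans with (Rpower (a * a + 1) r).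
    - rewrite Ers, Rpower_plus, Rpower_pow by nra.
      apply Rmult_le_compat_l; [nra |].
      unfold S; rewrite Rpower_mult_distr by lra.
      apply Rle_Rpower_l; unfold s; nra.
    - apply Rle_Rpower_l; nra. }
  rewrite Ea; nra.
Qed.

Lemma Rpower_opp_add_lt (a b r : R) :
  1 <= a -> 2 <= r -> a * a + 1 <= b ->
  Rpower b (- r) + Rpower (a * b) (- r) < Rpower (a * a) (- r).
Proof.
  intros Ha Hr Hb.
  pose proof (Rpower_mul_succ_lt a b r Ha Hr Hb) as Hkey.
  rewrite !Rpower_Ropp, <- !Rpower_mult_distr by nra.
  set (A := Rpower a r) in *; set (B := Rpower b r) in *.
  assert (HA : 0 < A) by apply exp_pos.
  assert (HB : 0 < B) by apply exp_pos.
  replace (/ B + / (A * B)) with (A * (A + 1) * / (A * A * B)) by (field; lra).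
  replace (/ (A * A)) with (B * / (A * A * B)) by (field; lra).
  apply Rmult_lt_compat_r; [apply Rinv_0_lt_compat, Rmult_lt_0_compat; nra | exact Hkey].
Qed.

Theorem mainTheorem7 (r : R) (p q : nat) :
  r > 11 / 5 ->
  prime (Z.of_nat p) -> prime (Z.of_nat q) ->
  (p > q * q)%nat ->
  sigma_neg r (q * p) < sigma_neg r (q * q).
Proof.
  intros Hr Hp Hq Hpq.
  pose proof (prime_ge_2 _ Hq).
  rewrite sigma_neg_mul_primes, sigma_neg_sq_prime by (assumption || nia).
  assert (Hq1 : 1 <= INR q) by (apply (le_INR 1); lia).
  assert (Hqp : INR q * INR q + 1 <= INR p)
    by (rewrite <- mult_INR, <- S_INR; apply le_INR; lia).
  pose proof (Rpower_opp_add_lt (INR q) (INR p) r Hq1 ltac:(lra) Hqp).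
  rewrite !mult_INR; lra.
Qed.
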